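(* Let $H$ be an ASC-hypergraph, $Y\in H$, $Z=\bigcup H\setminus Y$, and let $K$ and $J$ be constructions of $H_Y$ and ${}_Z H$ respectively. Then the continuation $K\ast J=K\cup\{X\cup_H Y\mid X\in J\}$ is a construction of $H$.
   Context: A hypergraph is a finite set $H$ of nonempty subsets of some finite set; its carrier is $\bigcup H$. For a family $F$ and set $Y$, $F_Y=\{X\in F\mid X\subseteq Y\}$, and ${}_Z F=\{X\cap Z\mid X\in F,\ X\cap Z\neq\emptyset\}$. For $X\subseteq\bigcup H$, $X\cup_H Y=X\cup Y$ if $X\cup Y\in H$, and $X\cup_H Y=X$ otherwise. A hypergraph partition of $H$ is a partition $\{H_1,\dots,H_n\}$ ($n\ge0$) of the set $H$ with $\{\bigcup H_1,\dots,\bigcup H_n\}$ a partition of $\bigcup H$; $H$ is connected if it has exactly one hypergraph partition; the finest hypergraph partition is the unique one whose blocks are connected. $H$ is atomic if $\{x\}\in H$ for all $x\in\bigcup H$; saturated if $X_1,X_2\in H$ with $X_1\cap X_2\neq\emptyset$ imply $X_1\cup X_2\in H$. An ASC-hypergraph is one that is atomic, saturated and connected (for such $H$, $H_Y$ and ${}_Z H$ are ASC-hypergraphs). Constructions of an atomic $H$, by induction on $|\bigcup H|$: (0) $\emptyset$ is the only construction of $\emptyset$; (1) if $|\bigcup H|\ge1$, $H$ connected, $x\in\bigcup H$, $K$ a construction of $H_{\bigcup H\setminus\{x\}}$, then $K\cup\{\bigcup H\}$ is a construction of $H$; (2) if $H$ is not connected with finest hypergraph partition $\{H_1,\dots,H_n\}$,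 $n\ge2$, and $K_i$ is a construction of $H_i$, then $K_1\cup\dots\cup K_n$ is a construction of $H$. *)

From mathcomp Require Import all_boot.
Set Implicit Arguments. Unset Strict Implicit. Unset Printing Implicit Defensive.

Section Hyper.
Variable T : finType.
Implicit Types (H F : {set {set T}}) (X Y Z : {set T}).

Definition hypergraph H : Prop := set0 \notin H.

Definition carrier H : {set T} := \bigcup_(X in H) X.

Definition restr F Y : {set {set T}} := [set X in F | X \subset Y].

Definition trace Z F : {set {set T}} :=
  [set X :&: Z | X in [set X in F | X :&: Z != set0]].

Definition cupH H X Y : {set T} := if X :|: Y \in H then X :|: Y else X.

(* hypergraph partition {H_1,...,H_n} of H: a partition of the set H (blocks
   nonempty, pairwise disjoint, covering H) such that the carriers of the
   blocks form a partition of the carrier of H (distinct blocks have disjoint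
   carriers; they cover carrier H since the blocks cover H). *)
Definition hpartition H (P : {set {set {set T}}}) : Prop :=
  partition P H /\
  (forall Hi Hj, Hi \in P -> Hj \in P -> Hi != Hj ->
     [disjoint carrier Hi & carrier Hj]).

Definition connected H : Prop :=
  exists P, hpartition H P /\ forall Q, hpartition H Q -> Q = P.

Definition finest_hpartition H (P : {set {set {set T}}}) : Prop :=
  hpartition H P /\ forall Hi, Hi \in P -> connected Hi.

Definition atomic H : Prop := forall x, x \in carrier H -> [set x] \in H.

Definition saturated H : Prop :=
  forall X1 X2, X1 \in H -> X2 \in H -> X1 :&: X2 != set0 -> X1 :|: X2 \in H.

Definition ASC H : Prop := hypergraph H /\ atomic H /\ saturated H /\ connected H.

Inductive construction : {set {set T}} -> {set {set T}} -> Prop :=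
| constr0 : construction set0 set0
| constr1 : forall H x K,
    atomic H -> connected H -> x \in carrier H ->
    construction (restr H (carrier H :\ x)) K ->
    construction H (K :|: [set carrier H])
| constr2 : forall H (P : {set {set {set T}}}) (f : {set {set T}} -> {set {set T}}),
    atomic H -> ~ connected H -> finest_hpartition H P -> 2 <= #|P| ->
    (forall Hi, Hi \in P -> construction Hi (f Hi)) ->
    construction H (\bigcup_(Hi in P) f Hi).

End Hyper.

(* Induction on the size of the carrier V of a saturated atomic hypergraph H.  If V is not an edge, H is the
   disjoint union of its components H_M, M ranging over the maximal edges, and the
   trace of H on Z = V \ Y decomposes along the traces M \ Y of these edges.  A
   construction of that trace thus splits into constructions of the traces of the
   components, and the continuation is assembled component by component: the
   induction hypothesis applies to the component containing Y, while on every other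
   component X \cup_H Y = X, because X \cup Y is never an edge.  If V is an edge
   and Z is not empty, the trace on Z is connected with carrier Z, so J = J' \cup {Z}
   with J' a construction of its restriction to Z \ {z}.  That restriction is the
   trace of H_(V \ {z}), so induction on H_(V \ {z}) followed by rule (1) at the
   point z yields K * J, the new edge V being Z \cup_H Y. *)

From mathcomp Require Import all_boot.
Set Implicit Arguments. Unset Strict Implicit. Unset Printing Implicit Defensive.

Section Hypergraphs.
Variable T : finType.
Implicit Types (G F B J K : {set {set T}}) (P Q : {set {set {set T}}}).
Implicit Types (A M N X Y Z W : {set T}).

(** * Restriction and trace *)

Lemma sub_carrier G X : X \in G -> X \subset carrier G.
Proof. exact: bigcup_sup. Qed.

Lemma carrierP G x : reflect (exists2 X, X \in G & x \in X) (x \in carrier G).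
Proof. exact: bigcupP. Qed.

Lemma carrierS F G : F \subset G -> carrier F \subset carrier G.
Proof. by move=> sFG; apply/bigcupsP => X XF; apply/sub_carrier/(subsetP sFG). Qed.

Lemma edge_neq0 G X : hypergraph G -> X \in G -> X != set0.
Proof. by move=> G0 XG; apply: contraNneq G0 => <-. Qed.

Lemma meet_neq0 A X Y : A \subset X -> A \subset Y -> A != set0 -> X :&: Y != set0.
Proof. by move=> sAX sAY; apply: contraNneq => XY0; rewrite -subset0 -XY0 subsetI sAX. Qed.

Lemma restrE G A X : (X \in restr G A) = (X \in G) && (X \subset A).
Proof. by rewrite inE. Qed.

Lemma restr_sub G A : restr G A \subset G.
Proof. by apply/subsetP => X; rewrite restrE => /andP[]. Qed.

Lemma restr_restr G A Y : Y \subset A -> restr (restr G A) Y = restr G Y.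
Proof.
move=> sYA; apply/setP => X; rewrite !restrE -andbA.
by case sXY: (X \subset Y); rewrite ?andbF // (subset_trans sXY sYA).
Qed.

Lemma restr_id G A : carrier G \subset A -> restr G A = G.
Proof.
move=> sGA; apply/setP => X; rewrite restrE andb_idr // => XG.
exact: subset_trans (sub_carrier XG) sGA.
Qed.

Lemma carrier_restr_sub G A : carrier (restr G A) \subset A.
Proof. by apply/bigcupsP => X; rewrite restrE => /andP[]. Qed.

Lemma carrier_restr_edge G M : M \in G -> carrier (restr G M) = M.
Proof.
move=> MG; apply/eqP; rewrite eqEsubset carrier_restr_sub.
by apply: sub_carrier; rewrite restrE MG subxx.
Qed.

Lemma carrier_restr G A : atomic G -> A \subset carrier G -> carrier (restr G A) = A.
Proof.
move=> atG sAG; apply/eqP; rewrite eqEsubset carrier_restr_sub.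
apply/subsetP => x xA; apply/carrierP; exists [set x]; last exact: set11.
by rewrite restrE atG ?sub1set // (subsetP sAG).
Qed.

Lemma hypergraph_restr G A : hypergraph G -> hypergraph (restr G A).
Proof. by move=> G0; rewrite /hypergraph restrE negb_and G0. Qed.

Lemma atomic_restr G A : atomic G -> atomic (restr G A).
Proof.
move=> atG x /carrierP[X]; rewrite !restrE => /andP[XG sXA] xX.
by rewrite sub1set (subsetP sXA) // andbT atG //; apply/carrierP; exists X.
Qed.

Lemma saturated_restr G A : saturated G -> saturated (restr G A).
Proof.
move=> satG X1 X2; rewrite !restrE => /andP[X1G s1] /andP[X2G s2] meet12.
by rewrite satG // subUset s1.
Qed.

Lemma traceP Z G W :
  reflect (exists2 X, X \in G & W = X :&: Z /\ W != set0) (W \in trace Z G).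
Proof.
apply: (iffP imsetP) => [[X]|[X XG [-> meetXZ]]].
  by rewrite inE => /andP[XG meetXZ] ->; exists X.
by exists X; rewrite // inE XG.
Qed.

Lemma hypergraph_trace Z G : hypergraph (trace Z G).
Proof. by apply/traceP => -[X _ [->]]; rewrite eqxx. Qed.

Lemma saturated_trace Z G : saturated G -> saturated (trace Z G).
Proof.
move=> satG W1 W2 /traceP[X1 X1G [-> meet1]] /traceP[X2 X2G [-> _]] meet12.
apply/traceP; exists (X1 :|: X2); last first.
  rewrite setIUl; split=> //; case/set0Pn: meet1 => x x1.
  by apply/set0Pn; exists x; rewrite inE x1.
by rewrite satG //; apply: contraNneq meet12 => X12; rewrite setIACA X12 set0I.
Qed.

Lemma trace_set0 G : trace set0 G = set0.
Proof. by apply/setP => W; rewrite inE; apply/traceP => -[X _ [->]]; rewrite setI0 eqxx. Qed.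

Lemma carrier_trace_sub Z G : carrier (trace Z G) \subset carrier G :&: Z.
Proof.
by apply/bigcupsP => W /traceP[X XG [-> _]]; apply: setSI; apply: sub_carrier.
Qed.

Lemma trace_id Z G : hypergraph G -> carrier G \subset Z -> trace Z G = G.
Proof.
move=> G0 sGZ; apply/setP => W; apply/traceP/idP => [[X XG [-> _]]|WG].
  by rewrite (setIidPl (subset_trans (sub_carrier XG) sGZ)).
by exists W; rewrite ?(setIidPl (subset_trans (sub_carrier WG) sGZ)) ?(edge_neq0 G0).
Qed.

Lemma trace_restrI Z G A : trace (A :&: Z) (restr G A) = trace Z (restr G A).
Proof.
apply/setP => W; apply/traceP/traceP => -[X]; rewrite restrE => /andP[XG sXA] WX;
  by exists X; rewrite ?restrE ?XG // setIA (setIidPl sXA) in WX *.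
Qed.

Lemma restr_trace Z G A :
  carrier G :\: Z \subset A -> restr (trace Z G) (A :&: Z) = trace Z (restr G A).
Proof.
move=> sGZA; apply/setP => W; rewrite restrE.
apply/andP/traceP => [[/traceP[X XG [eW neW]] sWAZ]|[X]].
  exists X => //; rewrite restrE XG; apply/subsetP => x xX.
  have [xZ|xNZ] := boolP (x \in Z).
    have xW : x \in W by rewrite eW inE xX.
    by have /setIP[] := subsetP sWAZ x xW.
  by apply: (subsetP sGZA); rewrite inE xNZ (subsetP (sub_carrier XG)).
rewrite restrE => /andP[XG sXA] [eW neW]; split; last by rewrite eW setSI.
by apply/traceP; exists X.
Qed.

(** * Maximal edges and components *)

Definition maximal_edges G := [set M | maxset (fun A => A \in G) M].

Lemma maximal_edgesP G M :
  reflect (M \in G /\ forall X, X \in G -> M \subset X -> X = M) (M \in maximal_edges G).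
Proof. by rewrite inE; apply: (iffP maxsetP) => -[]. Qed.

Lemma maximal_edge_exists G X : X \in G -> exists2 M, M \in maximal_edges G & X \subset M.
Proof. by move=> XG; have [M maxM sXM] := maxset_exists XG; exists M; rewrite ?inE. Qed.

Lemma maximal_edges0 : maximal_edges set0 = set0.
Proof. by apply/setP => M; rewrite [RHS]inE; apply/maximal_edgesP => -[]; rewrite inE. Qed.

Lemma maximal_edges_carrier G : carrier G \in G -> maximal_edges G = [set carrier G].
Proof.
move=> VG; apply/setP => M; rewrite in_set1; apply/maximal_edgesP/eqP => [[MG maxM]|->].
  by rewrite (maxM _ VG (sub_carrier MG)).
by split=> // X XG sVX; apply/eqP; rewrite eqEsubset sVX sub_carrier.
Qed.

Lemma hpartition_set1 G : G != set0 -> hpartition G [set G].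
Proof.
move=> nG0; split; first by rewrite /partition cover1 eqxx trivIset1 inE eq_sym nG0.
by move=> B B' /set1P-> /set1P->; rewrite eqxx.
Qed.

Section HPartition.
Variables (G : {set {set T}}) (P : {set {set {set T}}}).
Hypothesis partP : hpartition G P.

Lemma hpartition_block X : X \in G -> exists2 B, B \in P & X \in B.
Proof.
case: partP => /and3P[/eqP coverPG _ _] _ XG.
have /bigcupP[B BP XB] : X \in cover P by rewrite coverPG.
by exists B.
Qed.

Lemma hpartition_block_sub B : B \in P -> B \subset G.
Proof.
case: partP => /and3P[/eqP coverPG _ _] _ BP; rewrite -coverPG.
exact: bigcup_sup.
Qed.

Lemma hpartition_block_neq0 B : B \in P -> B != set0.
Proof. by case: partP => /and3P[_ _ P0] _ BP; apply: contraNneq P0 => <-. Qed.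

Lemma hpartition_block_eq B B' X X' :
  B \in P -> B' \in P -> X \in B -> X' \in B' -> X :&: X' != set0 -> B = B'.
Proof.
move=> BP B'P XB X'B' /set0Pn[x /setIP[xX xX']]; apply/eqP/negPn/negP => neqB.
have xB : x \in carrier B := subsetP (sub_carrier XB) x xX.
have xB' : x \in carrier B' := subsetP (sub_carrier X'B') x xX'.
have := partP.2 B B' BP B'P neqB; rewrite -setI_eq0 => /eqP/setP/(_ x).
by rewrite !inE xB xB'.
Qed.

End HPartition.

Lemma connected_carrier G : hypergraph G -> carrier G \in G -> connected G.
Proof.
move=> G0 VG; have nG0 : G != set0 by apply/set0Pn; exists (carrier G).
exists [set G]; split=> [|Q partQ]; first exact: hpartition_set1.
have [B BQ VB] := hpartition_block partQ VG.
have blockB B' : B' \in Q -> B' = B.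
  move=> B'Q; have /set0Pn[X XB'] := hpartition_block_neq0 partQ B'Q.
  have XG := subsetP (hpartition_block_sub partQ B'Q) X XB'.
  apply: (hpartition_block_eq partQ B'Q BQ XB' VB).
  by rewrite (setIidPl (sub_carrier XG)) (edge_neq0 G0).
have BG : B = G.
  apply/eqP; rewrite eqEsubset (hpartition_block_sub partQ BQ).
  by apply/subsetP => X /(hpartition_block partQ)[B' /blockB-> ].
by apply/setP => B'; rewrite inE -BG; apply/idP/eqP => [/blockB|->].
Qed.

Section Saturated.
Variable G : {set {set T}}.
Hypotheses (satG : saturated G) (G0 : hypergraph G).

Lemma maximal_edge_sup M X :
  M \in maximal_edges G -> X \in G -> X :&: M != set0 -> X \subset M.
Proof.
move=> /maximal_edgesP[MG maxM] XG meetXM.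
by rewrite -(maxM _ (satG XG MG meetXM) (subsetUr X M)) subsetUl.
Qed.

Lemma maximal_edge_eq M M' :
  M \in maximal_edges G -> M' \in maximal_edges G -> M :&: M' != set0 -> M = M'.
Proof.
move=> maxM maxM' meetMM'; have [MG _] := maximal_edgesP _ _ maxM.
have [M'G _] := maximal_edgesP _ _ maxM'.
apply/eqP; rewrite eqEsubset (maximal_edge_sup maxM' MG meetMM').
by rewrite (maximal_edge_sup maxM M'G) // setIC.
Qed.

Lemma restr_maximal_inj : {in maximal_edges G &, injective (restr G)}.
Proof.
move=> M M' /maximal_edgesP[MG _] /maximal_edgesP[M'G _] eqMM'.
by rewrite -(carrier_restr_edge MG) eqMM' carrier_restr_edge.
Qed.

Definition components := [set restr G M | M in maximal_edges G].

Lemma hpartition_components : hpartition G components.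
Proof.
have carrier_comp M : M \in maximal_edges G -> carrier (restr G M) = M.
  by case/maximal_edgesP => MG _; apply: carrier_restr_edge.
have disj_comp M M' : M \in maximal_edges G -> M' \in maximal_edges G ->
    restr G M != restr G M' -> [disjoint carrier (restr G M) & carrier (restr G M')].
  move=> maxM maxM' neqMM'; rewrite carrier_comp // carrier_comp // -setI_eq0.
  by apply: contraNT neqMM' => /(maximal_edge_eq maxM maxM') ->.
split=> [|_ _ /imsetP[M maxM ->] /imsetP[M' maxM' ->]]; last exact: disj_comp.
apply/and3P; split.
- rewrite cover_imset eqEsubset; apply/andP; split.
    by apply/bigcupsP => M _; apply: restr_sub.
  apply/subsetP => X XG; have [M maxM sXM] := maximal_edge_exists XG.
  by apply/bigcupP; exists M; rewrite ?restrE ?XG.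
- apply/trivIsetP => _ _ /imsetP[M maxM ->] /imsetP[M' maxM' ->] neqMM'.
  rewrite -setI_eq0; apply/set0Pn => -[X /setIP[XM XM']].
  have /set0Pn[x xX] := edge_neq0 G0 (subsetP (restr_sub G M) X XM).
  have := disj_comp _ _ maxM maxM' neqMM'; rewrite -setI_eq0 => /eqP/setP/(_ x).
  by rewrite !inE (subsetP (sub_carrier XM)) ?(subsetP (sub_carrier XM')).
- apply/imsetP => -[M /maximal_edgesP[MG _] M0].
  have : M \in restr G M by rewrite restrE MG subxx.
  by rewrite -M0 inE.
Qed.

Lemma finest_components : finest_hpartition G components.
Proof.
split=> [|_ /imsetP[M /maximal_edgesP[MG _] ->]]; first exact: hpartition_components.
apply: connected_carrier (hypergraph_restr M G0) _.
by rewrite carrier_restr_edge // restrE MG subxx.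
Qed.

Lemma carrier_connected : G != set0 -> connected G -> carrier G \in G.
Proof.
move=> nG0 [P [_ uniqP]].
have : G \in components.
  by rewrite (uniqP _ hpartition_components) -(uniqP _ (hpartition_set1 nG0)) set11.
by case/imsetP => M /maximal_edgesP[MG _] GM; rewrite GM carrier_restr_edge // -GM.
Qed.

Lemma two_maximal_edges :
  atomic G -> G != set0 -> carrier G \notin G -> 1 < #|maximal_edges G|.
Proof.
move=> atG /set0Pn[X XG] VNG; have [M1 max1 _] := maximal_edge_exists XG.
have [M1G _] := maximal_edgesP _ _ max1.
have : M1 \proper carrier G.
  by rewrite properEneq sub_carrier // andbT; apply: contraNneq VNG => <-.
case/properP => _ [x xV xNM1]; have [M2 max2 xM2] := maximal_edge_exists (atG x xV).
rewrite (cardsD1 M1) max1 ltnS card_gt0; apply/set0Pn; exists M2.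
by rewrite in_setD1 max2 andbT; apply: contraNneq xNM1 => <-; rewrite -sub1set.
Qed.

End Saturated.

Section FinestHPartition.
Variables (G : {set {set T}}) (P : {set {set {set T}}}).
Hypotheses (satG : saturated G) (G0 : hypergraph G) (finP : finest_hpartition G P).

Lemma finest_block_mem B X : B \in P -> X \in G -> X :&: carrier B != set0 -> X \in B.
Proof.
move=> BP XG /set0Pn[x /setIP[xX /carrierP[Y YB xY]]].
have [B' B'P XB'] := hpartition_block finP.1 XG.
rewrite -(hpartition_block_eq finP.1 B'P BP XB' YB) //.
by apply/set0Pn; exists x; rewrite inE xX.
Qed.

Lemma saturated_finest_block B : B \in P -> saturated B.
Proof.
move=> BP X1 X2 X1B X2B meet12; have sBG := hpartition_block_sub finP.1 BP.
have X1G := subsetP sBG _ X1B.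
apply: finest_block_mem BP (satG X1G (subsetP sBG _ X2B) meet12) _.
exact: meet_neq0 (subsetUl X1 X2) (sub_carrier X1B) (edge_neq0 G0 X1G).
Qed.

Lemma finest_block_restr B :
  B \in P -> carrier B \in maximal_edges G /\ B = restr G (carrier B).
Proof.
move=> BP; have sBG := hpartition_block_sub finP.1 BP.
have B0 : hypergraph B := contra (subsetP sBG set0) G0.
have VB := carrier_connected (saturated_finest_block BP) B0
  (hpartition_block_neq0 finP.1 BP) (finP.2 B BP).
split.
  apply/maximal_edgesP; split=> [|X XG sVX]; first exact: subsetP sBG _ VB.
  apply/eqP; rewrite eqEsubset sVX sub_carrier //.
  by apply: (finest_block_mem BP XG); rewrite (setIidPr sVX) (edge_neq0 B0 VB).
apply/setP => X; rewrite restrE; apply/idP/andP => [XB|[XG sX]].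
  by rewrite (subsetP sBG) // sub_carrier.
by apply: (finest_block_mem BP XG); rewrite (setIidPl sX) (edge_neq0 G0 XG).
Qed.

Lemma finest_hpartitionE : P = components G.
Proof.
apply/setP => B; apply/idP/imsetP => [BP|[M maxM ->]].
  by have [maxV eqB] := finest_block_restr BP; exists (carrier B).
have [MG maxMG] := maximal_edgesP _ _ maxM.
have [B' B'P MB'] := hpartition_block finP.1 MG.
have [/maximal_edgesP[VG _] eqB'] := finest_block_restr B'P.
by rewrite -(maxMG _ VG (sub_carrier MB')) -eqB'.
Qed.

End FinestHPartition.

(** * Constructions *)

Lemma construction_edges G J X :
  construction G J -> X \in J -> X \subset carrier G /\ X != set0.
Proof.
move=> hJ; elim: hJ X => {G J} [|G x K _ _ xG _ IH|G P f _ _ finP _ _ IH] X.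
- by rewrite inE.
- case/setUP => [/IH[sXG nX0]|/set1P->]; last by split=> //; apply/set0Pn; exists x.
  by split=> //; apply: subset_trans sXG (carrierS (restr_sub _ _)).
- case/bigcupP => B BP /IH[]// sXB nX0; split=> //.
  exact: subset_trans sXB (carrierS (hpartition_block_sub finP.1 BP)).
Qed.

Lemma construction0 J : construction (set0 : {set {set T}}) J -> J = set0.
Proof.
move E : set0 => G hJ.
case: hJ E => // [{}G x K _ _ /carrierP[X XG _] _|{}G P f _ _ finP two _] G0.
  by rewrite -G0 inE in XG.
have /card_gt0P[B BP] : 0 < #|P| by apply: leq_trans two.
have := hpartition_block_neq0 finP.1 BP.
by rewrite -subset0 G0 (hpartition_block_sub finP.1 BP).
Qed.

Lemma construction_connected G J :
  construction G J -> connected G -> G != set0 ->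
  exists x J', [/\ x \in carrier G, construction (restr G (carrier G :\ x)) J'
                 & J = J' :|: [set carrier G]].
Proof.
case=> [|{}G x K _ _ xG hK|{}G P f _ nconnG _ _ _] connG nG0; first by rewrite eqxx in nG0.
  by exists x, K.
by case: nconnG.
Qed.

Lemma construction_components G J :
  saturated G -> hypergraph G -> construction G J ->
  exists2 f : {set T} -> {set {set T}},
    forall M, M \in maximal_edges G -> construction (restr G M) (f M)
    & J = \bigcup_(M in maximal_edges G) f M.
Proof.
move=> satG G0 hJ.
case: hJ satG G0 => [|{}G x K atG connG xG hK|{}G P f _ _ finP _ hf] satG G0.
- by exists (fun=> set0) => [M|]; rewrite maximal_edges0 ?inE // big_set0.
- have nG0 : G != set0 by case/carrierP: xG => X XG _; apply/set0Pn; exists X.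
  have maxE := maximal_edges_carrier (carrier_connected satG G0 nG0 connG).
  exists (fun=> K :|: [set carrier G]) => [M|]; last by rewrite maxE (big_set1 _ _ (fun=> _)).
  by rewrite maxE => /set1P->; rewrite restr_id //; apply: (constr1 atG connG xG hK).
- rewrite (finest_hpartitionE satG G0 finP) in hf *.
  exists (fun M => f (restr G M)) => [M maxM|]; first by apply: hf; apply: imset_f.
  by rewrite big_imset_idem //; apply: setUid.
Qed.

Lemma construction_of_components G (f : {set T} -> {set {set T}}) :
  saturated G -> atomic G -> hypergraph G ->
  (forall M, M \in maximal_edges G -> construction (restr G M) (f M)) ->
  construction G (\bigcup_(M in maximal_edges G) f M).
Proof.
move=> satG atG G0 hf; have [->|nG0] := eqVneq G set0.
  by rewrite maximal_edges0 big_set0; apply: constr0.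
have [VG|VNG] := boolP (carrier G \in G).
  rewrite maximal_edges_carrier // in hf *; rewrite big_set1.
  by have := hf _ (set11 _); rewrite restr_id.
have nconnG : ~ connected G by move/(carrier_connected satG G0 nG0); apply/negP.
have twoP : 1 < #|components G|.
  by rewrite card_in_imset; [apply: two_maximal_edges | apply: restr_maximal_inj].
have hP B : B \in components G -> construction B (f (carrier B)).
  case/imsetP => M maxM ->; case/maximal_edgesP: (maxM) => MG _.
  by rewrite carrier_restr_edge //; apply: hf.
have := constr2 atG nconnG (finest_components satG G0) twoP hP.
rewrite big_imset_idem /=; last exact: setUid.
by under eq_bigr => M /maximal_edgesP[MG _] do rewrite carrier_restr_edge //.
Qed.

Lemma maximal_edges_trace G Z : saturated G ->
  maximal_edges (trace Z G) = [set M :&: Z | M in maximal_edges G & M :&: Z != set0].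
Proof.
move=> satG; apply/setP => N.
apply/maximal_edgesP/imsetP => [[/traceP[X XG [eN nN0]] maxN]|[M]].
  have [M maxM sXM] := maximal_edge_exists XG; have [MG _] := maximal_edgesP _ _ maxM.
  have sNMZ : N \subset M :&: Z by rewrite eN setSI.
  have MZ0 : M :&: Z != set0.
    by apply: contraNneq nN0 => MZ0; rewrite -subset0 -MZ0.
  exists M; first by rewrite inE maxM MZ0.
  by apply/esym/(maxN _ _ sNMZ)/traceP; exists M.
rewrite inE => /andP[maxM MZ0] ->; have [MG _] := maximal_edgesP _ _ maxM.
split=> [|_ /traceP[X XG [-> _]] sMZX]; first by apply/traceP; exists M.
have sXM : X \subset M.
  apply: (maximal_edge_sup satG maxM XG).
  exact: meet_neq0 (subset_trans sMZX (subsetIl X Z)) (subsetIl M Z) MZ0.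
by apply/eqP; rewrite eqEsubset sMZX setSI.
Qed.

Lemma restr_trace_maximal G Z M : saturated G -> M \in maximal_edges G ->
  restr (trace Z G) (M :&: Z) = trace Z (restr G M).
Proof.
move=> satG maxM; apply/setP => W; rewrite restrE.
apply/andP/traceP => [[/traceP[X XG [eW nW0]] sW]|[X]].
  have sWX : W \subset X by rewrite eW subsetIl.
  have sWM : W \subset M := subset_trans sW (subsetIl M Z).
  by exists X; rewrite // restrE XG (maximal_edge_sup satG maxM XG (meet_neq0 sWX sWM nW0)).
rewrite restrE => /andP[XG sXM] [eW nW0]; split; first by apply/traceP; exists X.
by rewrite eW setSI.
Qed.

Lemma construction_trace_components G Z J :
  saturated G -> construction (trace Z G) J ->
  exists2 f : {set T} -> {set {set T}},
    forall M, M \in maximal_edges G -> construction (trace Z (restr G M)) (f M)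
    & J = \bigcup_(M in maximal_edges G) f M.
Proof.
move=> satG hJ.
have [f hf ->] :=
  construction_components (@saturated_trace Z G satG) (@hypergraph_trace Z G) hJ.
exists (fun M => if M :&: Z != set0 then f (M :&: Z) else set0) => [M maxM|].
  case: ifPn => [MZ0|/negPn/eqP MZ0].
    rewrite -restr_trace_maximal //; apply: hf.
    by rewrite maximal_edges_trace //; apply/imsetP; exists M => //; apply/setIdP.
  by rewrite -trace_restrI MZ0 trace_set0; apply: constr0.
rewrite maximal_edges_trace // big_imset_idem /=; last exact: setUid.
by rewrite big_set /= big_mkcondr.
Qed.

(** * Continuations *)

Definition continuation G Y K J := K :|: [set cupH G X Y | X in J].

Definition continuation_closed G := forall Y K J,
  Y \in G -> construction (restr G Y) K -> construction (trace (carrier G :\: Y) G) J ->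
  construction G (continuation G Y K J).

Lemma cupH_restr G A X Y : X :|: Y \subset A -> cupH (restr G A) X Y = cupH G X Y.
Proof. by move=> sXYA; rewrite /cupH restrE sXYA andbT. Qed.

Lemma cupH_restr_out G A X Y : ~~ (Y \subset A) -> cupH (restr G A) X Y = X.
Proof. by move=> nsYA; rewrite /cupH restrE subUset (negbTE nsYA) !andbF. Qed.

Lemma cupH_restr_maximal G M X Y : saturated G -> M \in maximal_edges G ->
  X \subset M -> X != set0 -> cupH (restr G M) X Y = cupH G X Y.
Proof.
move=> satG maxM sXM nX0; rewrite /cupH restrE.
have [XYG|] //= := boolP (X :|: Y \in G).
by rewrite (maximal_edge_sup satG maxM XYG (meet_neq0 (subsetUl X Y) sXM nX0)).
Qed.

Lemma continuation_of_components G :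
  saturated G -> atomic G -> hypergraph G ->
  (forall M, M \in maximal_edges G -> continuation_closed (restr G M)) ->
  continuation_closed G.
Proof.
move=> satG atG G0 IH Y K J YG hK hJ.
have [f hf ->] := construction_trace_components satG hJ.
pose g M := continuation (restr G M) Y (if Y \subset M then K else set0) (f M).
have f_sub M X : M \in maximal_edges G -> X \in f M -> X \subset M /\ X != set0.
  move=> maxM XfM; have [sX nX0] := construction_edges (hf M maxM) XfM.
  split=> //; apply: subset_trans sX (subset_trans (carrier_trace_sub _ _) _).
  by rewrite subIset // carrier_restr_sub.
have hg M : M \in maximal_edges G -> construction (restr G M) (g M).
  move=> maxM; have [MG _] := maximal_edgesP _ _ maxM.
  have MZ : M :\: Y = M :&: (carrier G :\: Y) by rewrite setIDA (setIidPl (sub_carrier MG)).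
  rewrite /g; case: ifPn => [sYM|nsYM].
    apply: IH => //; [by rewrite restrE YG | by rewrite restr_restr |].
    by rewrite carrier_restr_edge // MZ trace_restrI; apply: hf.
  have MY0 : M :&: Y = set0.
    apply/eqP; apply: contraNT nsYM => meetMY.
    by apply: (maximal_edge_sup satG maxM YG); rewrite setIC.
  rewrite /continuation set0U (eq_imset _ (fun X => cupH_restr_out G X nsYM)) imset_id.
  have sMZ : carrier (restr G M) \subset carrier G :\: Y.
    by rewrite carrier_restr_edge // subsetD sub_carrier // -setI_eq0 MY0 eqxx.
  by rewrite -(trace_id (hypergraph_restr M G0) sMZ); apply: hf.
suff -> : continuation G Y K (\bigcup_(M in maximal_edges G) f M) =
          \bigcup_(M in maximal_edges G) g M by apply: construction_of_components.
rewrite /g /continuation big_split /=; congr (_ :|: _).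
  have [M0 maxM0 sYM0] := maximal_edge_exists YG.
  rewrite -big_mkcondr (big_pred1 M0) // => M; apply/andP/eqP => [[maxM sYM]|->] //.
  exact: (maximal_edge_eq satG maxM maxM0 (meet_neq0 sYM sYM0 (edge_neq0 G0 YG))).
rewrite (big_morph (fun J => [set cupH G X Y | X in J]) (imsetU _) (imset0 _)).
apply: eq_bigr => M maxM; apply: eq_in_imset => X XfM.
by have [sXM nX0] := f_sub M X maxM XfM; rewrite cupH_restr_maximal.
Qed.

Lemma continuation_connected G :
  atomic G -> hypergraph G -> carrier G \in G ->
  (forall A, A \proper carrier G -> continuation_closed (restr G A)) ->
  continuation_closed G.
Proof.
move=> atG G0 VG IH Y K J YG hK hJ; set V := carrier G in VG IH hJ *.
set Z := V :\: Y in hJ *; have sYV : Y \subset V := sub_carrier YG.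
have [Z0|nZ0] := eqVneq Z set0.
  move: hJ; rewrite Z0 trace_set0 => /construction0->.
  have sVY : V \subset Y by rewrite -setD_eq0 -/Z Z0.
  by move: hK; rewrite /continuation imset0 setU0 restr_id.
have sZV : Z \subset V := subsetDl V Y.
have ZZ : Z \in trace Z G by apply/traceP; exists V; rewrite ?(setIidPr sZV).
have VZ : carrier (trace Z G) = Z.
  apply/eqP; rewrite eqEsubset sub_carrier // andbT.
  exact: subset_trans (carrier_trace_sub _ _) (subsetIr _ _).
have connZ : connected (trace Z G).
  by apply: connected_carrier (@hypergraph_trace Z G) _; rewrite VZ.
have [|z [J' [zZ hJ' ->]]] := construction_connected hJ connZ.
  by apply/set0Pn; exists Z.
rewrite VZ in zZ hJ' *; set A := V :\ z; have zV : z \in V := subsetP sZV z zZ.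
have sYA : Y \subset A.
  apply/subsetP => y yY; rewrite !inE (subsetP sYV) // andbT.
  by apply: contraTneq zZ => <-; rewrite inE yY.
have AZ : A :&: Z = Z :\ z.
  by apply/setP => x; rewrite !inE; case: (x \in V); case: (x \in Y); case: (x == z).
have hA : construction (restr G A) (continuation (restr G A) Y K J').
  apply: IH => //; [by rewrite properD1 | by rewrite restrE YG | by rewrite restr_restr |].
  have sVZA : V :\: Z \subset A.
    by rewrite setDDr setDv set0U subIset // sYA orbT.
  have AY : A :\: Y = A :&: Z by rewrite /Z setIDA (setIidPl (subsetDl _ _)).
  by rewrite carrier_restr ?subsetDl // AY trace_restrI -restr_trace // AZ.
suff -> : continuation G Y K (J' :|: [set Z]) = continuation (restr G A) Y K J' :|: [set V].
  exact: constr1 atG (connected_carrier G0 VG) zV hA.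
have ZY : Z :|: Y = V.
  apply/setP => x; rewrite !inE.
  by case xY: (x \in Y); rewrite /= ?orbF // (subsetP sYV x xY).
rewrite /continuation imsetU imset_set1 setUA {2}/cupH ZY VG; congr (_ :|: _ :|: _).
apply: eq_in_imset => X XJ'; rewrite cupH_restr // subUset sYA andbT.
have [sX _] := construction_edges hJ' XJ'.
by apply: subset_trans sX (subset_trans (carrier_restr_sub _ _) _); rewrite -AZ subsetIl.
Qed.

Lemma saturated_continuation_closed G :
  saturated G -> atomic G -> hypergraph G -> continuation_closed G.
Proof.
have [n] := ubnP #|carrier G|; elim: n G => // n IHn G /ltnSE-leVn satG atG G0.
have IH A : A \proper carrier G -> continuation_closed (restr G A).
  move=> ltAV; apply: IHn; rewrite ?carrier_restr ?(proper_sub ltAV) //.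
  - exact: leq_trans (proper_card ltAV) leVn.
  - exact: saturated_restr.
  - exact: atomic_restr.
  - exact: hypergraph_restr.
have [VG|VNG] := boolP (carrier G \in G); first exact: continuation_connected.
apply: continuation_of_components => // M /maximal_edgesP[MG _]; apply: IH.
by rewrite properEneq sub_carrier // andbT; apply: contraNneq VNG => <-.
Qed.

End Hypergraphs.

Theorem proposition7p5 (T : finType) (H : {set {set T}}) (Y : {set T})
    (K J : {set {set T}}) :
  ASC H -> Y \in H ->
  construction (restr H Y) K ->
  construction (trace (carrier H :\: Y) H) J ->
  construction H (K :|: [set cupH H X Y | X in J]).
Proof. by case=> G0 [atG [satG _]]; apply: saturated_continuation_closed. Qed.
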